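(* Let $\mathcal{A}\in\mathbb{R}^{n\times n\times n\times n}$ be a real symmetric tensor. Then $\mathcal{A}(x,x,x,x)=\sum_{i,j,k,l}\mathcal{A}_{ijkl}x_ix_jx_kx_l\ge0$ for all $x\in\mathbb{R}^n$ if and only if $\sum_{i,j,k,l}\mathcal{A}_{ijkl}X_{ij}X_{kl}\ge 0$ for all real symmetric positive semidefinite $X\in\mathbb{R}^{n\times n}$.
   Context: A tensor is symmetric if its entries $\mathcal{A}_{ijkl}$ are invariant under all permutations of $(i,j,k,l)$. *)

From mathcomp Require Import all_boot all_order all_algebra all_fingroup.
From mathcomp Require Import reals.
Set Implicit Arguments. Unset Strict Implicit. Unset Printing Implicit Defensive.
Import Order.TTheory GRing.Theory Num.Theory.
Local Open Scope ring_scope.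

Definition tensor4 (R : Type) (n : nat) := 'I_n -> 'I_n -> 'I_n -> 'I_n -> R.

Definition tentry (R : Type) (n : nat) (A : tensor4 R n) (idx : 'I_4 -> 'I_n) : R :=
  A (idx 0%R) (idx 1%R) (idx 2%R) (idx 3%R).

Definition sym_tensor (R : Type) (n : nat) (A : tensor4 R n) : Prop :=
  forall (s : 'S_4) (idx : 'I_4 -> 'I_n), tentry A (idx \o s) = tentry A idx.

Definition quartic_form (R : realType) (n : nat) (A : tensor4 R n) (x : 'cV[R]_n) : R :=
  \sum_(i < n) \sum_(j < n) \sum_(k < n) \sum_(l < n)
     A i j k l * x i 0 * x j 0 * x k 0 * x l 0.

Definition mat_form (R : realType) (n : nat) (A : tensor4 R n) (X : 'M[R]_n) : R :=
  \sum_(i < n) \sum_(j < n) \sum_(k < n) \sum_(l < n)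
     A i j k l * X i j * X k l.

Definition psd (R : realType) (n : nat) (X : 'M[R]_n) : Prop :=
  X^T = X /\ forall v : 'cV[R]_n, 0 <= (v^T *m X *m v) 0 0.

From mathcomp Require Import all_boot all_order all_algebra all_fingroup.
From mathcomp Require Import reals ring.
Set Implicit Arguments. Unset Strict Implicit. Unset Printing Implicit Defensive.
Import Order.TTheory GRing.Theory Num.Theory.
Local Open Scope ring_scope.

(* For a matrix S put G_S(u) = A(u,u,u,u) + 6 A(S,u,u) + 3 A(S,S): this is the
   expectation of A(u+z,u+z,u+z,u+z) for a centred Gaussian z of covariance S.
   So G_0 is the quartic form and G_S(0) = 3 sum A_ijkl S_ij S_kl.  Replacing S
   by S + v v^T amounts to replacing u by u + t v for a centred real variable t
   with E t^2 = 1 and E t^4 = 3; the law putting masses 1,2,6,2,1 (over 12) on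
   t = -2,-1,0,1,2 has these moments, so G_(S + v v^T)(u) is a convex
   combination of values of G_S.  Every positive semidefinite X is a sum of
   matrices v v^T (peel them off by Schur complements), hence a nonnegative
   quartic form gives G_X >= 0, in particular at u = 0. *)

Section PsdRank1Decomposition.
Variables (R : realType) (n : nat).
Implicit Types (X : 'M[R]_n) (v w : 'cV[R]_n).

Definition qform X v : R := (v^T *m X *m v) 0 0.

Lemma mx11D (a b : 'M[R]_1) : (a + b) 0 0 = a 0 0 + b 0 0.
Proof. by rewrite mxE. Qed.

Lemma mx11B (a b : 'M[R]_1) : (a - b) 0 0 = a 0 0 - b 0 0.
Proof. by rewrite !mxE. Qed.

Lemma mx11Z c (a : 'M[R]_1) : (c *: a) 0 0 = c * a 0 0.
Proof. by rewrite mxE. Qed.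

Lemma mx11M (a b : 'M[R]_1) : (a *m b) 0 0 = a 0 0 * b 0 0.
Proof. by rewrite mxE big_ord1. Qed.

Lemma mx11_tr (a : 'M[R]_1) : a^T 0 0 = a 0 0.
Proof. by rewrite mxE. Qed.

Lemma mulmx_delta_col X i j : (X *m (delta_mx j 0 : 'cV_n)) i 0 = X i j.
Proof. by rewrite -colE mxE. Qed.

Lemma delta_mx_bilin X i w : ((delta_mx i 0 : 'cV_n)^T *m X *m w) 0 0 = (X *m w) i 0.
Proof. by rewrite trmx_delta -mulmxA -rowE mxE. Qed.

Lemma qform_delta X i : qform X (delta_mx i 0) = X i i.
Proof. by rewrite /qform delta_mx_bilin mulmx_delta_col. Qed.

Lemma qform_shift X v c i : X^T = X ->
  qform X (v + c *: delta_mx i 0) = qform X v + 2 * c * (X *m v) i 0 + c ^+ 2 * X i i.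
Proof.
move=> symX; set e : 'cV[R]_n := delta_mx i 0.
have wXe w : (w^T *m X *m e) 0 0 = (X *m w) i 0.
  have -> : w^T *m X *m e = (e^T *m X *m w)^T.
    by rewrite !trmx_mul trmxK symX mulmxA.
  by rewrite mxE delta_mx_bilin.
rewrite /qform mulmxDr -scalemxAr [(v + _)^T]linearD linearZ /=.
rewrite !mulmxDl -!scalemxAl !(mx11D, mx11Z) !delta_mx_bilin wXe mulmx_delta_col.
ring.
Qed.

Lemma psd_sym X : psd X -> X^T = X.
Proof. by case. Qed.

Lemma psd_qform_ge0 X v : psd X -> 0 <= qform X v.
Proof. by case=> _; apply. Qed.

Lemma psd_diag_ge0 X i : psd X -> 0 <= X i i.
Proof. by move=> psdX; rewrite -qform_delta psd_qform_ge0. Qed.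

Lemma psd_diag_eq0 X i j : psd X -> X i i = 0 -> X i j = 0.
Proof.
move=> psdX Xii0; apply/eqP/negPn/negP => Xij0.
(* the quadratic form along [e_j + c e_i] is affine in [c] with slope [2 X i j] *)
set c := - (X j j + 1) / (2 * X i j).
have := psd_qform_ge0 (delta_mx j 0 + c *: delta_mx i 0) psdX.
rewrite qform_shift ?psd_sym // qform_delta mulmx_delta_col Xii0.
have -> : X j j + 2 * c * X i j + c ^+ 2 * 0 = -1 by rewrite /c; field.
by rewrite ler0N1.
Qed.

Definition schur X i := X - (X i i)^-1 *: (col i X *m (col i X)^T).

Lemma schur_entry X i j k : schur X i j k = X j k - X j i * X k i / X i i.
Proof. by rewrite !mxE big_ord1 !mxE; ring. Qed.

Lemma psd_schur X i : psd X -> 0 < X i i -> psd (schur X i).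
Proof.
move=> psdX Xii_gt0; have symX := psd_sym psdX.
split.
  by rewrite /schur linearB linearZ /= trmx_mul trmxK symX.
move=> v; set s := (X *m v) i 0.
have p_s : ((col i X)^T *m v) 0 0 = s by rewrite tr_col symX -row_mul mxE.
have -> : (v^T *m schur X i *m v) 0 0 = qform X v - s ^+ 2 / X i i.
  rewrite /schur mulmxBr mulmxBl -scalemxAr -scalemxAl.
  have -> : v^T *m (col i X *m (col i X)^T) *m v
          = ((col i X)^T *m v)^T *m ((col i X)^T *m v).
    by rewrite trmx_mul trmxK !mulmxA.
  by rewrite mx11B mx11Z mx11M mx11_tr p_s mulrC expr2.
(* completing the square in the direction e_i *)
suff -> : qform X v - s ^+ 2 / X i i = qform X (v + (- s / X i i) *: delta_mx i 0).
  exact: psd_qform_ge0.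
by rewrite qform_shift // -/s; field; rewrite gt_eqF.
Qed.

Lemma schur_rank1_split X i : 0 < X i i ->
  let w := (Num.sqrt (X i i))^-1 *: col i X in X = schur X i + w *m w^T.
Proof.
move=> Xii_gt0 w; rewrite /w linearZ /= -scalemxAl -scalemxAr scalerA -invfM.
by rewrite -expr2 sqr_sqrtr ?ltW // subrK.
Qed.

Definition diag_supp X := [set j | X j j != 0].

Lemma diag_supp_schur X i : psd X -> i \in diag_supp X ->
  diag_supp (schur X i) \proper diag_supp X.
Proof.
move=> psdX; rewrite inE => Xii0; apply/properP; split.
  apply/subsetP => j; rewrite !inE schur_entry; apply: contra => /eqP Xjj0.
  by rewrite (@psd_diag_eq0 X j i psdX Xjj0) Xjj0 !mul0r subrr.
by exists i; rewrite !inE // schur_entry mulfK // subrr eqxx.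
Qed.

Lemma psd_diag_supp0 X : psd X -> diag_supp X = set0 -> X = 0.
Proof.
move=> psdX supp0; apply/matrixP => j k; rewrite mxE.
apply: psd_diag_eq0 psdX _; apply/eqP.
by move/setP/(_ j): supp0; rewrite !inE => /negbFE.
Qed.

Lemma psd_sum_rank1 X : psd X -> exists vs : seq 'cV[R]_n, X = \sum_(v <- vs) v *m v^T.
Proof.
have [m] := ubnP #|diag_supp X|; elim: m X => // m IH X lt_supp_m psdX.
have [supp0 | [i supp_i]] := set_0Vmem (diag_supp X).
  by exists [::]; rewrite big_nil; apply: psd_diag_supp0.
have Xii_gt0 : 0 < X i i.
  by rewrite lt_def psd_diag_ge0 // andbT; rewrite inE in supp_i.
have lt_supp_schur := proper_card (diag_supp_schur psdX supp_i).
have [vs schurE] := IH _ (leq_trans lt_supp_schur lt_supp_m) (psd_schur psdX Xii_gt0).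
exists ((Num.sqrt (X i i))^-1 *: col i X :: vs).
by rewrite big_cons -schurE addrC -schur_rank1_split.
Qed.

Lemma psd_rank1 v : psd (v *m v^T).
Proof.
split=> [|w]; first by rewrite trmx_mul trmxK.
have -> : w^T *m (v *m v^T) *m w = (v^T *m w)^T *m (v^T *m w).
  by rewrite trmx_mul trmxK !mulmxA.
by rewrite mx11M mx11_tr -expr2 sqr_ge0.
Qed.

End PsdRank1Decomposition.

Section GaussianSmoothing.
Variables (R : realType) (n : nat) (A : tensor4 R n).
Implicit Types (S : 'M[R]_n) (u v : 'cV[R]_n) (F G : 'I_n -> 'I_n -> 'I_n -> 'I_n -> R).

Definition sum4 F : R :=
  \sum_(i < n) \sum_(j < n) \sum_(k < n) \sum_(l < n) F i j k l.

Lemma eq_sum4 F G : (forall i j k l, F i j k l = G i j k l) -> sum4 F = sum4 G.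
Proof.
move=> eqFG; apply: eq_bigr => i _; apply: eq_bigr => j _.
by apply: eq_bigr => k _; apply: eq_bigr => l _.
Qed.

Lemma sum4_eq0 F : (forall i j k l, F i j k l = 0) -> sum4 F = 0.
Proof.
move=> F0; rewrite /sum4 big1 // => i _; rewrite big1 // => j _.
by rewrite big1 // => k _; rewrite big1.
Qed.

Lemma sum4D F G : sum4 F + sum4 G = sum4 (fun i j k l => F i j k l + G i j k l).
Proof.
rewrite /sum4 -big_split; apply: eq_bigr => i _; rewrite -big_split.
by apply: eq_bigr => j _; rewrite -big_split; apply: eq_bigr => k _; rewrite -big_split.
Qed.

Lemma mulr_sum4 c F : c * sum4 F = sum4 (fun i j k l => c * F i j k l).
Proof.
rewrite /sum4 mulr_sumr; apply: eq_bigr => i _; rewrite mulr_sumr.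
by apply: eq_bigr => j _; rewrite mulr_sumr; apply: eq_bigr => k _; rewrite mulr_sumr.
Qed.

Lemma sum4_exchange23 F : sum4 F = sum4 (fun i j k l => F i k j l).
Proof. by apply: eq_bigr => i _; apply: exchange_big. Qed.

Lemma sum4_exchange34 F : sum4 F = sum4 (fun i j k l => F i j l k).
Proof. by apply: eq_bigr => i _; apply: eq_bigr => j _; apply: exchange_big. Qed.

Lemma quartic_formE u :
  quartic_form A u = sum4 (fun i j k l => A i j k l * u i 0 * u j 0 * u k 0 * u l 0).
Proof. by []. Qed.

(* 6 A(S,u,u) and 3 A(S,S) are written as sums over the pairings of the four
   slots, so that gauss_form_add_rank1 holds for every tensor. *)
Definition mixed_form S u := sum4 (fun i j k l => A i j k l *
  (S i j * u k 0 * u l 0 + S i k * u j 0 * u l 0 + S i l * u j 0 * u k 0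
   + u i 0 * u l 0 * S j k + u i 0 * u k 0 * S j l + u i 0 * u j 0 * S k l)).

Definition pair_form S := sum4 (fun i j k l => A i j k l *
  (S i j * S k l + S i k * S j l + S i l * S j k)).

Definition gauss_form S u := quartic_form A u + mixed_form S u + pair_form S.

Lemma gauss_form_add_rank1 S u v :
  12 * gauss_form (S + v *m v^T) u =
  2 * gauss_form S (u + v) + 2 * gauss_form S (u - v)
  + gauss_form S (u + 2 *: v) + gauss_form S (u - 2 *: v) + 6 * gauss_form S u.
Proof.
rewrite /gauss_form /mixed_form /pair_form !quartic_formE !sum4D !mulr_sum4 !sum4D.
by apply: eq_sum4 => i j k l; rewrite !mxE !big_ord1 !mxE; ring.
Qed.

Definition gauss_nonneg S := forall u, 0 <= gauss_form S u.

Lemma gauss_nonneg0 : (forall u, 0 <= quartic_form A u) -> gauss_nonneg 0.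
Proof.
move=> quartic_ge0 u; rewrite /gauss_form /mixed_form /pair_form.
rewrite !sum4_eq0 ?addr0 // => i j k l; rewrite !mxE; ring.
Qed.

Lemma gauss_nonneg_add_rank1 S v : gauss_nonneg S -> gauss_nonneg (S + v *m v^T).
Proof.
move=> gaussS_ge0 u; rewrite -(@pmulr_rge0 _ 12) // gauss_form_add_rank1.
move: (gauss_form S) (gaussS_ge0 : forall u, 0 <= gauss_form S u) => g g_ge0.
by rewrite !addr_ge0 ?mulr_ge0 ?g_ge0 ?ler0n.
Qed.

Lemma gauss_nonneg_sum_rank1 (vs : seq 'cV[R]_n) :
  (forall u, 0 <= quartic_form A u) -> gauss_nonneg (\sum_(v <- vs) v *m v^T).
Proof.
move=> quartic_ge0; elim: vs => [|v vs IH]; first by rewrite big_nil; apply: gauss_nonneg0.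
by rewrite big_cons addrC; apply: gauss_nonneg_add_rank1.
Qed.

Lemma gauss_form_at0 S : gauss_form S 0 = pair_form S.
Proof.
rewrite /gauss_form /mixed_form quartic_formE !sum4_eq0 ?add0r // => i j k l.
all: by rewrite !mxE; ring.
Qed.

Lemma sym_tensor_swap23 : sym_tensor A -> forall i j k l, A i j k l = A i k j l.
Proof.
move=> symA i j k l.
have := symA (tperm (1 : 'I_4) 2) (fun m : 'I_4 => nth i [:: i; j; k; l] m).
by rewrite /tentry /= !permE.
Qed.

Lemma sym_tensor_swap34 : sym_tensor A -> forall i j k l, A i j k l = A i j l k.
Proof.
move=> symA i j k l.
have := symA (tperm (2 : 'I_4) 3) (fun m : 'I_4 => nth i [:: i; j; k; l] m).
by rewrite /tentry /= !permE.
Qed.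

Lemma pair_form_sym S : sym_tensor A -> pair_form S = 3 * mat_form A S.
Proof.
move=> symA; pose F i j k l := A i j k l * S i j * S k l.
have E2 : sum4 (fun i j k l => A i j k l * (S i k * S j l)) = sum4 F.
  rewrite sum4_exchange23; apply: eq_sum4 => i j k l.
  by rewrite /F -sym_tensor_swap23 // mulrA.
have E3 : sum4 (fun i j k l => A i j k l * (S i l * S j k)) = sum4 F.
  rewrite sum4_exchange34 sum4_exchange23; apply: eq_sum4 => i j k l.
  by rewrite /F sym_tensor_swap34 // -sym_tensor_swap23 // mulrA.
have -> : mat_form A S = sum4 F by [].
have -> : 3 * sum4 F = sum4 F + sum4 F + sum4 F by ring.
rewrite -[X in _ = _ + X]E3 -[X in _ = _ + X + _]E2 !sum4D.
by apply: eq_sum4 => i j k l; rewrite /F; ring.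
Qed.

Lemma mat_form_rank1 u : mat_form A (u *m u^T) = quartic_form A u.
Proof.
apply: eq_sum4 => i j k l; rewrite !mxE !big_ord1 !mxE; ring.
Qed.

End GaussianSmoothing.

Theorem theorem5p2 (R : realType) (n : nat) (A : tensor4 R n) :
  sym_tensor A ->
  ((forall x : 'cV[R]_n, 0 <= quartic_form A x) <->
   (forall X : 'M[R]_n, psd X -> 0 <= mat_form A X)).
Proof.
move=> symA; split=> [quartic_ge0 X psdX | mat_ge0 x].
  have [vs ->] := psd_sum_rank1 psdX.
  rewrite -(@pmulr_rge0 _ 3) // -pair_form_sym // -gauss_form_at0.
  exact: gauss_nonneg_sum_rank1.
by rewrite -mat_form_rank1; apply/mat_ge0/psd_rank1.
Qed.
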